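(* Let $n\ge2$, $p\in[0,1]$, and let $T_{k+1}$ be the number of $k$-simplices of $\mathcal{L}\sim X(n,p)$ that are critical for the lexicographical matching. Then for every integer $1\le k\le n-1$, \[ p^{\binom{k+1}{2}+k}\binom{n-2}{k}(1-p)\le\mathbb{E}[T_{k+1}]\le p^{\binom{k+1}{2}-k-1}\binom{n-1}{k}(1-p) \] (for $p\in(0,1]$ in the upper bound).
   Context: $G(n,p)$ is the random graph on $[n]$ where each of the $\binom n2$ edges is present independently with probability $p$; write $Y_{i,j}=Y_{j,i}$ for the edge indicator of $\{i,j\}$. $X(n,p)$ is the clique complex of $G\sim G(n,p)$: the simplicial complex on $[n]$ whose simplices are the nonempty vertex sets spanning cliques in $G$; a $k$-simplex is such a set of size $k+1$. Lexicographical matching on a simplicial complex $\mathcal{L}$: for $s\in\mathcal{L}$ let $I_{\mathcal{L}}(s)=\{j: j<\min(s),\ s\cup\{j\}\in\mathcal{L}\}$; whenever nonempty, pair $s$ with $s\cup\{\min I_{\mathcal{L}}(s)\}$. A simplex is critical if it is in no pair. Explicitly, with $C_{k+1}$ the set of $(k+1)$-subsets of $[n]$ and $s_-=s\setminus\{\min s\}$, \[ T_{k+1}=\sum_{s\in C_{k+1}}\prod_{i\ne j\in s}Y_{i,j}\Bigl[\prod_{i=1}^{\min(s)-1}\Bigl(1-\prod_{j\in s}Y_{i,j}\Bigr)-\prod_{i=1}^{\min(s)-1}\Bigl(1-\prod_{j\in s_-}Y_{i,j}\Bigr)\Bigr]. \] *)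

From mathcomp Require Import all_boot all_order all_algebra.
Set Implicit Arguments. Unset Strict Implicit. Unset Printing Implicit Defensive.
Import Order.TTheory GRing.Theory Num.Theory.

(* Vertex set [n] is modelled by 'I_n (order-preserving relabelling 1..n -> 0..n-1).
   A graph on [n] is a set E of 2-element subsets of 'I_n. *)

Definition edge_pairs (n : nat) : {set {set 'I_n}} := [set e : {set 'I_n} | #|e| == 2].

Definition is_clique (n : nat) (E : {set {set 'I_n}}) (s : {set 'I_n}) : bool :=
  [forall i in s, forall j in s, (i != j) ==> ([set i; j] \in E)].

Definition in_clique_complex (n : nat) (E : {set {set 'I_n}}) (s : {set 'I_n}) : bool :=
  (s != set0) && is_clique E s.

Definition below_min (n : nat) (j : 'I_n) (s : {set 'I_n}) : bool :=
  [forall x in s, (j < x)%N].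

Definition lexI (n : nat) (E : {set {set 'I_n}}) (s : {set 'I_n}) : {set 'I_n} :=
  [set j | below_min j s && in_clique_complex E (j |: s)].

Definition is_min_of (n : nat) (j : 'I_n) (A : {set 'I_n}) : bool :=
  (j \in A) && [forall j' in A, (j <= j')%N].

(* s is paired with s ∪ {min I(s)} *)
Definition matched_up (n : nat) (E : {set {set 'I_n}}) (s : {set 'I_n}) : bool :=
  lexI E s != set0.

Definition matched_down (n : nat) (E : {set {set 'I_n}}) (s : {set 'I_n}) : bool :=
  [exists t : {set 'I_n}, in_clique_complex E t &&
     [exists j : 'I_n, is_min_of j (lexI E t) && (s == j |: t)]].

Definition critical (n : nat) (E : {set {set 'I_n}}) (s : {set 'I_n}) : bool :=
  [&& in_clique_complex E s, ~~ matched_up E s & ~~ matched_down E s].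

(* T_{k1} : number of critical simplices with k1 vertices (i.e. (k1-1)-simplices) *)
Definition Tcrit (n : nat) (E : {set {set 'I_n}}) (k1 : nat) : nat :=
  #|[set s : {set 'I_n} | (#|s| == k1) && critical E s]|.

Definition gnp_weight (R : realFieldType) (n : nat) (p : R) (E : {set {set 'I_n}}) : R :=
  (p ^+ #|E| * (1 - p) ^+ (#|edge_pairs n| - #|E|))%R.

Definition gnp_expect (R : realFieldType) (n : nat) (p : R)
    (X : {set {set 'I_n}} -> R) : R :=
  (\sum_(E : {set {set 'I_n}} | E \subset edge_pairs n) gnp_weight p E * X E)%R.

From Pilot Require Import Defs.
From mathcomp Require Import all_boot all_order all_algebra.
From mathcomp Require Import ring lra zify.
Import Order.TTheory GRing.Theory Num.Theory.
Local Open Scope ring_scope.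

(* A (k+1)-set s with least vertex m is critical iff it spans a clique, no
   vertex below m is joined to all of s, and some vertex below m is joined to
   all of s \ m (so that m is not min I(s \ m)).  These events only involve
   the edges inside s and the pairwise disjoint stars from the vertices below
   m to s or to s \ m, so by independence
     E[critical s] = p^C(k+1,2) ((1 - p^(k+1))^L - (1 - p^k)^L),
   where L = #(vertices below m), the paper's min(s) - 1.  For the lower bound
   keep only the C(n-2,k) sets with L = 1; for the upper bound there are at
   most C(n-1,k) sets for each value of L, and the sum over L of the
   difference of the two geometric series is at most p^-(k+1) - p^-k. *)

Lemma geometric_sum_mul (R : comNzRingType) (x : R) (N : nat) :
  (1 - x) * \sum_(i < N) x ^+ i = 1 - x ^+ N.
Proof.
rewrite -[in RHS](expr1n R N) subrXX; congr (_ * _).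
by apply: eq_bigr => i _; rewrite expr1n mul1r.
Qed.

Lemma sum_geometric_sub (R : fieldType) (x : R) (N : nat) : x != 0 ->
  \sum_(i < N) (1 - x) ^+ i = (1 - (1 - x) ^+ N) / x.
Proof. by move=> x0; rewrite -geometric_sum_mul subKr mulrC mulKf. Qed.

Lemma sum_geometric_diff_le (R : realFieldType) (a b : R) (N : nat) :
  0 < a -> a <= b -> b <= 1 ->
  \sum_(M < N) ((1 - a) ^+ M - (1 - b) ^+ M) <= a^-1 - b^-1.
Proof.
move=> a0 ab b1; have b0 : 0 < b := lt_le_trans a0 ab.
rewrite sumrB !sum_geometric_sub ?lt0r_neq0 // !mulrBl !mul1r.
have : (1 - b) ^+ N / b <= (1 - a) ^+ N / a.
  apply: ler_pM.
  - by apply: exprn_ge0; lra.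
  - by rewrite invr_ge0 ltW.
  - by apply: lerXn2r; rewrite ?nnegrE; lra.
  - by rewrite lef_pV2 ?posrE.
lra.
Qed.

Lemma sum_subsets_binomial (R : comNzRingType) (T : finType) (V : {set T}) (x y : R) :
  \sum_(F : {set T} | F \subset V) x ^+ (#|V| - #|F|) * y ^+ #|F| = (x + y) ^+ #|V|.
Proof.
rewrite exprDn (partition_big (fun F : {set T} => inord #|F| : 'I_#|V|.+1) xpredT) //=.
apply: eq_bigr => j _.
rewrite (eq_bigl (fun F : {set T} => (F \subset V) && (#|F| == j))); last first.
  move=> F; apply: andb_id2l => /subset_leq_card FV.
  by rewrite -(inj_eq val_inj) /= inordK.
rewrite (eq_bigr (fun _ => x ^+ (#|V| - j) * y ^+ j)); last by move=> F /andP[_ /eqP ->].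
rewrite sumr_const -cards_draws; congr (_ *+ _).
by apply: eq_card => F; rewrite inE.
Qed.

Lemma sum_supsets (R : nmodType) (T : finType) (D V : {set T}) (f : {set T} -> R) :
  D \subset V ->
  \sum_(E : {set T} | (E \subset V) && (D \subset E)) f E
    = \sum_(F : {set T} | F \subset V :\: D) f (D :|: F).
Proof.
move=> DV; rewrite (reindex_onto (fun F => D :|: F) (fun E => E :\: D)) /=; last first.
  by move=> E /andP[_ /setIidPr DE]; rewrite -[in RHS](setID E D) DE.
apply: eq_bigl => F; rewrite subUset DV subsetUl setDUl setDv set0U subsetD andbT.
by congr (_ && _); apply/eqP/setDidPl.
Qed.

Lemma prod_one_sub_nat (R : nzRingType) (I : Type) (r : seq I) (b : pred I) :
  \prod_(j <- r) (1 - (b j)%:R) = (all (predC b) r)%:R :> R.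
Proof.
elim: r => [|j r IH]; first by rewrite big_nil.
by rewrite big_cons IH /=; case: (b j); rewrite /= ?subrr ?mul0r ?subr0 ?mul1r.
Qed.

Section LexMatching.
Context {n : nat}.
Implicit Types (E : {set {set 'I_n}}) (s t : {set 'I_n}) (i j m : 'I_n).

Definition star j t : {set {set 'I_n}} := [set [set j; x] | x in t].

Definition clique_edges s : {set {set 'I_n}} := [set e in edge_pairs n | e \subset s].

Definition lower s : {set 'I_n} := [set j | below_min j s].

Lemma star_sub_edge_pairs j t : j \notin t -> star j t \subset edge_pairs n.
Proof.
move=> jt; apply/subsetP => _ /imsetP[x xt ->].
by rewrite inE cards2 (contraNneq _ jt) // => ->.
Qed.

Lemma card_star j t : j \notin t -> #|star j t| = #|t|.
Proof.
move=> jt; rewrite card_in_imset // => x y _ yt /setP /(_ y).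
rewrite !inE eqxx orbT => /orP[/eqP yj|/eqP //].
by move: jt; rewrite -yj yt.
Qed.

Lemma disjoint_star i j t : i \notin t -> i != j -> [disjoint star i t & star j t].
Proof.
move=> it ij; rewrite -setI_eq0; apply/eqP/setP => e; rewrite !inE.
apply/andP => -[/imsetP[x _ ->] /imsetP[y yt /setP /(_ i)]].
rewrite !inE eqxx /= => /esym /orP[/eqP ij'|/eqP iy].
  by rewrite ij' eqxx in ij.
by rewrite iy yt in it.
Qed.

Lemma clique_edges_sub s : clique_edges s \subset edge_pairs n.
Proof. by apply/subsetP => e; rewrite inE => /andP[]. Qed.

Lemma card_clique_edges s : #|clique_edges s| = 'C(#|s|, 2).
Proof. by rewrite -cards_draws; apply: eq_card => e; rewrite !inE andbC. Qed.

Lemma clique_edgesS s t : t \subset s -> clique_edges t \subset clique_edges s.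
Proof.
move=> ts; apply/subsetP => e; rewrite !inE => /andP[-> et].
exact: subset_trans ts.
Qed.

Lemma disjoint_clique_edges_star j s t : j \notin s ->
  [disjoint clique_edges s & star j t].
Proof.
move=> js; rewrite -setI_eq0; apply/eqP/setP => e; rewrite !inE.
apply/andP => -[/andP[_ /subsetP es] /imsetP[x _ ex]].
by move: js; rewrite es // ex !inE eqxx.
Qed.

Lemma clique_edgesU1 j s : j \notin s -> clique_edges (j |: s) = clique_edges s :|: star j s.
Proof.
move=> js; apply/setP => e; rewrite !inE; apply/idP/idP.
  move=> /andP[/cards2P [x [y [xy ->]]] /subsetP es].
  have xs : x \in j |: s by apply: es; rewrite !inE eqxx.
  have ys : y \in j |: s by apply: es; rewrite !inE eqxx orbT.
  move: xs ys; rewrite !inE => /orP[/eqP xj|xs] /orP[/eqP yj|ys].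
  - by rewrite xj yj eqxx in xy.
  - by apply/orP; right; apply/imsetP; exists y; rewrite // xj.
  - by apply/orP; right; apply/imsetP; exists x; rewrite // yj setUC.
  - rewrite cards2 xy /=; apply/orP; left.
    by apply/subsetP => z; rewrite !inE => /orP[] /eqP ->.
case/orP => [/andP[-> es]|/imsetP[x xs ->]].
  by apply: subset_trans es _; apply: subsetUr.
have jx : j != x by apply: contraNneq js => ->.
rewrite cards2 jx /=.
by apply/subsetP => z; rewrite !inE => /orP[] /eqP ->; rewrite ?eqxx ?xs ?orbT.
Qed.

Lemma is_cliqueE E s : is_clique E s = (clique_edges s \subset E).
Proof.
apply/forall_inP/subsetP.
  move=> cl e; rewrite !inE => /andP[/cards2P [x [y [xy ->]]] /subsetP es].
  have xs : x \in s by apply: es; rewrite !inE eqxx.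
  have ys : y \in s by apply: es; rewrite !inE eqxx orbT.
  by move: (cl x xs) => /forall_inP /(_ y ys) /implyP; apply.
move=> sub i si; apply/forall_inP => j js; apply/implyP => ij; apply: sub.
rewrite !inE cards2 ij /=; apply/subsetP => x; rewrite !inE.
by case/orP => /eqP ->.
Qed.

Lemma below_min_notin j s : below_min j s -> j \notin s.
Proof. by move=> /forall_inP bj; apply/negP => /bj; rewrite ltnn. Qed.

Lemma mem_lexI E s j :
  (j \in Defs.lexI E s) = [&& below_min j s, (clique_edges s \subset E) & (star j s \subset E)].
Proof.
rewrite inE /in_clique_complex; case bj: (below_min j s) => //=.
rewrite is_cliqueE clique_edgesU1 ?below_min_notin // subUset andb_idl //.
by move=> _; apply/set0Pn; exists j; rewrite !inE eqxx.
Qed.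

Lemma exists_min_of s : s != set0 -> exists m, is_min_of m s.
Proof.
case/set0Pn => x xs; have [m ms mle] := arg_minnP (fun y : 'I_n => val y) xs.
by exists m; apply/andP; split; last by apply/forall_inP.
Qed.

Lemma is_min_of_inj m1 m2 s : is_min_of m1 s -> is_min_of m2 s -> m1 = m2.
Proof.
move=> /andP[m1s /forall_inP m1le] /andP[m2s /forall_inP m2le].
by apply: val_inj; apply/eqP; rewrite eqn_leq m1le ?m2le.
Qed.

Lemma below_min_least m s j : is_min_of m s -> below_min j s = (j < m)%N.
Proof.
move=> /andP[ms /forall_inP mle]; apply/forall_inP/idP => [/(_ m ms)//|jm x xs].
exact: leq_trans jm (mle x xs).
Qed.

Lemma card_lower m s : is_min_of m s -> #|lower s| = m.
Proof.
move=> mins; have mn : (m <= n)%N := ltnW (ltn_ord m).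
have -> : lower s = widen_ord mn @: [set: 'I_m].
  apply/setP => j; rewrite inE (below_min_least _ _ _ mins).
  apply/idP/imsetP => [jm|[i _ ->]]; last exact: (ltn_ord i).
  by exists (Ordinal jm); rewrite ?inE //; apply: val_inj.
rewrite card_imset ?cardsT ?card_ord //.
by move=> i j [] /val_inj.
Qed.

Lemma below_min_setD1 m s j : is_min_of m s -> (j <= m)%N -> below_min j (s :\ m).
Proof.
move=> /andP[_ /forall_inP mle] jm; apply/forall_inP => x /setD1P[xm xs].
by rewrite (leq_ltn_trans jm) // ltn_neqAle mle // andbT (inj_eq val_inj) eq_sym.
Qed.

Lemma matched_upE E s : clique_edges s \subset E ->
  matched_up E s = [exists j in lower s, star j s \subset E].
Proof.
move=> cl; apply/set0Pn/exists_inP => [[j]|[j]].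
  by rewrite mem_lexI => /and3P[bj _ sj]; exists j; rewrite ?inE.
by rewrite inE => bj sj; exists j; rewrite mem_lexI bj cl.
Qed.

Lemma matched_down_lexI E s m : (1 < #|s|)%N -> is_min_of m s -> clique_edges s \subset E ->
  matched_down E s = is_min_of m (Defs.lexI E (s :\ m)).
Proof.
move=> s2 mins cl; have /andP[ms _] := mins.
apply/existsP/idP => [[t /andP[_ /existsP[j /andP[minj /eqP sE]]]]|minI].
  have /andP[+ _] := minj; rewrite mem_lexI => /and3P[bj _ _].
  suff mj : m = j by rewrite mj sE setU1K ?below_min_notin.
  apply: (is_min_of_inj _ _ _ mins); rewrite sE /is_min_of setU11.
  by apply/forall_inP => x; rewrite !inE => /orP[/eqP -> //|/(forall_inP bj)/ltnW].
exists (s :\ m); apply/andP; split; last first.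
  by apply/existsP; exists m; rewrite minI setD1K // eqxx.
rewrite /in_clique_complex -card_gt0 is_cliqueE.
rewrite (subset_trans _ cl) ?clique_edgesS ?subD1set // andbT.
by move: s2; rewrite (cardsD1 m s) ms add1n ltnS.
Qed.

Lemma is_min_of_lexI_setD1 E s m : is_min_of m s -> clique_edges s \subset E ->
  is_min_of m (Defs.lexI E (s :\ m)) = ~~ [exists j in lower s, star j (s :\ m) \subset E].
Proof.
move=> mins cl; have /andP[ms _] := mins.
have clt : clique_edges (s :\ m) \subset E.
  by rewrite (subset_trans _ cl) ?clique_edgesS ?subD1set.
have lexI_lt j : (j < m)%N -> (j \in Defs.lexI E (s :\ m)) = (star j (s :\ m) \subset E).
  by move=> jm; rewrite mem_lexI below_min_setD1 ?clt // ltnW.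
have starm : star m (s :\ m) \subset E.
  by move: cl; rewrite -{1}(setD1K ms) clique_edgesU1 ?setD11 // subUset => /andP[].
rewrite /is_min_of mem_lexI below_min_setD1 // clt starm negb_exists_in /=.
apply/forall_inP/forall_inP => [minm j | nolow j jI].
  rewrite inE (below_min_least _ _ _ mins) => jm; apply/negP => sj.
  by have := minm j; rewrite lexI_lt // sj leqNgt jm => /(_ isT).
rewrite leqNgt; apply/negP => jm.
by have := nolow j; rewrite inE (below_min_least _ _ _ mins) jm -lexI_lt // jI => /(_ isT).
Qed.

End LexMatching.

Section GnpExpectation.
Variables (R : realFieldType) (n : nat) (p : R).
Local Notation U := (edge_pairs n).
Local Notation Ex := (@gnp_expect R n p).
Implicit Types (X Y : {set {set 'I_n}} -> R) (K D E : {set {set 'I_n}}).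

Lemma eq_gnp_expect X Y : (forall E, E \subset U -> X E = Y E) -> Ex X = Ex Y.
Proof. by move=> XY; apply: eq_bigr => E /XY ->. Qed.

Lemma gnp_expectB X Y : Ex (fun E => X E - Y E) = Ex X - Ex Y.
Proof. by rewrite /gnp_expect -sumrB; apply: eq_bigr => E _; rewrite mulrBr. Qed.

Lemma gnp_expect_sum (I : finType) (P : pred I) (X : I -> {set {set 'I_n}} -> R) :
  Ex (fun E => \sum_(i | P i) X i E) = \sum_(i | P i) Ex (X i).
Proof. by rewrite /gnp_expect; under eq_bigr do rewrite mulr_sumr; rewrite exchange_big. Qed.

Lemma gnp_expect_subset D : D \subset U -> Ex (fun E => (D \subset E)%:R) = p ^+ #|D|.
Proof.
move=> DU; rewrite /gnp_expect /gnp_weight.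
transitivity (\sum_(E : {set {set 'I_n}} | (E \subset U) && (D \subset E))
                p ^+ #|E| * (1 - p) ^+ (#|U| - #|E|)).
  by rewrite big_mkcondr; apply: eq_bigr => E _; case: (D \subset E); rewrite ?mulr1 ?mulr0.
have cardUD : #|U :\: D| = (#|U| - #|D|)%N by rewrite cardsD (setIidPr DU).
rewrite sum_supsets //.
transitivity (p ^+ #|D| * ((1 - p) + p) ^+ #|U :\: D|); last by rewrite subrK expr1n mulr1.
rewrite -sum_subsets_binomial mulr_sumr; apply: eq_bigr => F.
rewrite subsetD => /andP[_ DF]; rewrite disjoint_sym in DF.
rewrite cardsU (disjoint_setI0 DF) cards0 subn0 exprD cardUD subnDA.
by rewrite mulrAC -!mulrA.
Qed.

Lemma gnp_expect_subset_avoid (I : eqType) (S : I -> {set {set 'I_n}}) (r : seq I) K :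
  uniq r -> K \subset U -> {in r, forall j, S j \subset U} ->
  {in r &, forall i j, i != j -> [disjoint S i & S j]} ->
  {in r, forall j, [disjoint K & S j]} ->
  Ex (fun E => (K \subset E)%:R * \prod_(j <- r) (1 - (S j \subset E)%:R))
    = p ^+ #|K| * \prod_(j <- r) (1 - p ^+ #|S j|).
Proof.
elim: r K => [|i r IH] K /=.
  move=> _ KU _ _ _; rewrite big_nil mulr1 -gnp_expect_subset //.
  by apply: eq_gnp_expect => E _; rewrite big_nil mulr1.
move=> /andP[ir ur] KU SU Sdisj KS.
have Sdisj_r : {in r &, forall i j, i != j -> [disjoint S i & S j]}.
  by move=> j1 j2 j1r j2r; apply: Sdisj; rewrite inE ?j1r ?j2r orbT.
have KSi : [disjoint K & S i] by apply: KS; rewrite inE eqxx.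
have KSiS : {in r, forall j, [disjoint K :|: S i & S j]}.
  move=> j jr; have ij : i != j by apply: contraNneq ir => ->.
  rewrite -setI_eq0 setIUl !disjoint_setI0 ?setU0 //.
    by apply: Sdisj; rewrite ?inE ?eqxx ?jr ?orbT.
  by apply: KS; rewrite inE jr orbT.
(* 1{K ⊆ E} (1 - 1{S i ⊆ E}) = 1{K ⊆ E} - 1{K ∪ S i ⊆ E}, and the induction
   hypothesis applies to both terms. *)
rewrite big_cons (@eq_gnp_expect _ (fun E =>
   (K \subset E)%:R * \prod_(j <- r) (1 - (S j \subset E)%:R)
   - (K :|: S i \subset E)%:R * \prod_(j <- r) (1 - (S j \subset E)%:R))); last first.
  move=> E _; rewrite big_cons subUset.
  by case: (K \subset E); case: (S i \subset E); rewrite /=; ring.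
have SUr : {in r, forall j, S j \subset U} by move=> j jr; apply: SU; rewrite inE jr orbT.
have KSr : {in r, forall j, [disjoint K & S j]} by move=> j jr; apply: KS; rewrite inE jr orbT.
have KSiU : K :|: S i \subset U by rewrite subUset KU SU // inE eqxx.
rewrite gnp_expectB (IH K ur KU SUr Sdisj_r KSr) (IH _ ur KSiU SUr Sdisj_r KSiS).
rewrite cardsU (disjoint_setI0 KSi) cards0 subn0 exprD.
by rewrite mulrBl mul1r mulrBr mulrA.
Qed.

Lemma critical_indicator E (s : {set 'I_n}) (m : 'I_n) : (1 < #|s|)%N -> is_min_of m s ->
  (critical E s)%:R =
    (clique_edges s \subset E)%:R * \prod_(j <- enum (lower s)) (1 - (star j s \subset E)%:R)
  - (clique_edges s \subset E)%:R *
      \prod_(j <- enum (lower s)) (1 - (star j (s :\ m) \subset E)%:R) :> R.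
Proof.
move=> s2 mins; have /andP[ms _] := mins.
have all_enumE (b : pred 'I_n) :
    all (predC b) (enum (lower s)) = ~~ [exists j in lower s, b j].
  rewrite negb_exists_in; apply/allP/forall_inP => nb j jl; apply: nb => //.
  by rewrite mem_enum.
  by rewrite -mem_enum.
rewrite !prod_one_sub_nat !all_enumE -mulrBr /critical /in_clique_complex is_cliqueE.
have [cl|] := boolP (clique_edges s \subset E); last by rewrite andbF mul0r.
have s0 : s != set0 by apply/set0Pn; exists m.
rewrite matched_upE // (matched_down_lexI _ _ _ s2 mins cl) is_min_of_lexI_setD1 // s0 mul1r.
have [A|nA] := boolP [exists j in lower s, star j s \subset E].
  suff -> : [exists j in lower s, star j (s :\ m) \subset E] by rewrite subrr.
  have [j jl sj] := exists_inP A; apply/exists_inP; exists j => //.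
  by apply: subset_trans sj; apply: imsetS; apply: subD1set.
by case: [exists j in lower s, _]; rewrite ?subr0 ?subrr.
Qed.

Lemma gnp_expect_critical (s : {set 'I_n}) (k : nat) : (1 <= k)%N -> #|s| = k.+1 ->
  Ex (fun E => (critical E s)%:R) =
    p ^+ 'C(k.+1, 2) * ((1 - p ^+ k.+1) ^+ #|lower s| - (1 - p ^+ k) ^+ #|lower s|).
Proof.
move=> k1 sk; have s2 : (1 < #|s|)%N by rewrite sk ltnS.
have [m mins] : exists m, is_min_of m s by apply: exists_min_of; rewrite -card_gt0 sk.
have /andP[ms _] := mins.
have avoid_stars (t : {set 'I_n}) : t \subset s ->
    Ex (fun E => (clique_edges s \subset E)%:R *
                 \prod_(j <- enum (lower s)) (1 - (star j t \subset E)%:R))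
    = p ^+ 'C(k.+1, 2) * (1 - p ^+ #|t|) ^+ #|lower s|.
  move=> ts; have notin_t j : j \in enum (lower s) -> j \notin t.
    by rewrite mem_enum inE => /below_min_notin; apply: contra; apply: (subsetP ts).
  rewrite gnp_expect_subset_avoid ?enum_uniq ?clique_edges_sub ?card_clique_edges ?sk //.
  - rewrite big_enum (eq_bigr (fun _ => 1 - p ^+ #|t|)) ?prodr_const // => j jl.
    by rewrite card_star // notin_t ?mem_enum.
  - by move=> j /notin_t; apply: star_sub_edge_pairs.
  - by move=> i j /notin_t it _; apply: disjoint_star.
  - move=> j jl; apply: disjoint_clique_edges_star.
    by move: jl; rewrite mem_enum inE => /below_min_notin.
rewrite (eq_gnp_expect _ _ (fun E _ => critical_indicator E _ _ s2 mins)) gnp_expectB.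
have card_sm : #|s :\ m| = k by move: sk; rewrite (cardsD1 m s) ms => -[].
by rewrite !avoid_stars ?subD1set // -mulrBr sk card_sm.
Qed.

Lemma gnp_expect_Tcrit (k : nat) : (1 <= k)%N ->
  Ex (fun E => (Tcrit E k.+1)%:R) =
    \sum_(s : {set 'I_n} | #|s| == k.+1)
      p ^+ 'C(k.+1, 2) * ((1 - p ^+ k.+1) ^+ #|lower s| - (1 - p ^+ k) ^+ #|lower s|).
Proof.
move=> k1; rewrite (eq_gnp_expect _
  (fun E => \sum_(s : {set 'I_n} | #|s| == k.+1) (critical E s)%:R)); last first.
  move=> E _; rewrite /Tcrit -sum1_card natr_sum big_mkcond [RHS]big_mkcond /=.
  by apply: eq_bigr => s _; rewrite inE; case: (_ == _); case: (critical E s).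
rewrite gnp_expect_sum; apply: eq_bigr => s /eqP sk; exact: gnp_expect_critical.
Qed.

End GnpExpectation.

Lemma card_lower_class_le (N k M : nat) :
  (#|[set s : {set 'I_N.+1} | (#|s| == k.+1) && (#|lower s| == M)]| <= 'C(N, k))%N.
Proof.
set S := [set s | _].
have minS s : s \in S -> is_min_of (inord M) s.
  rewrite inE => /andP[/eqP sk /eqP sM].
  have [m mins] : exists m, is_min_of m s by apply: exists_min_of; rewrite -card_gt0 sk.
  suff -> : inord M = m by [].
  by apply: val_inj; rewrite /= -sM (card_lower _ _ mins) inordK.
have inj : {in S &, injective (fun s => s :\ inord M)}.
  by move=> s1 s2 /minS/andP[m1 _] /minS/andP[m2 _] e; rewrite -(setD1K m1) e setD1K.
rewrite -(card_in_imset inj).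
apply: (@leq_trans #|[set A : {set 'I_N.+1} | A \subset [set~ ord0] & #|A| == k]|).
  apply/subset_leq_card/subsetP => _ /imsetP[s sS ->].
  have /andP[ms /forall_inP mle] := minS s sS.
  rewrite inE; apply/andP; split.
    apply/subsetP => x /setD1P[xm xs]; rewrite !inE; apply: contra xm => /eqP x0.
    move: (mle x xs); rewrite x0 leqn0 => /eqP m0.
    by apply/eqP/val_inj; rewrite /= m0.
  by move: sS; rewrite inE (cardsD1 (inord M) s) ms add1n => /andP[/eqP [->] _].
by rewrite cards_draws cardsC1 card_ord.
Qed.

Lemma sum_card_lower_le (R : numDomainType) (N k : nat) (F : nat -> R) :
  (forall M, 0 <= F M) ->
  \sum_(s : {set 'I_N.+1} | #|s| == k.+1) F #|lower s| <= 'C(N, k)%:R * \sum_(M < N.+2) F M.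
Proof.
move=> F_ge0.
rewrite (partition_big (fun s : {set 'I_N.+1} => inord #|lower s| : 'I_N.+2) xpredT) //=.
rewrite mulr_sumr; apply: ler_sum => M _.
rewrite (eq_bigl (fun s : {set 'I_N.+1} => (#|s| == k.+1) && (#|lower s| == M))); last first.
  move=> s.
  rewrite -(inj_eq val_inj) /= inordK // ltnS.
  by rewrite (leq_trans (max_card _)) ?card_ord.
rewrite (eq_bigr (fun _ => F M)) => [|s /andP[_ /eqP ->] //].
rewrite sumr_const mulr_natl ler_wpMn2l //.
apply: leq_trans (card_lower_class_le N k M); apply: subset_leq_card.
by apply/subsetP => s; rewrite inE.
Qed.

Lemma sum_card_lower_ge (R : numDomainType) (N k : nat) (F : nat -> R) :
  (forall M, 0 <= F M) ->
  'C(N, k)%:R * F 1%N <= \sum_(s : {set 'I_N.+2} | #|s| == k.+1) F #|lower s|.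
Proof.
move=> F_ge0; pose one : 'I_N.+2 := Ordinal (isT : 1 < N.+2)%N.
pose T := [set t : {set 'I_N.+2} | t \subset ~: [set ord0; one] & #|t| == k].
have one_notin t : t \in T -> one \notin t.
  by rewrite inE => /andP[/subsetP tC _]; apply/negP => /tC; rewrite !inE eqxx orbT.
have card_lower_one t : t \in T -> #|lower (one |: t)| = 1%N.
  move=> tT; rewrite (card_lower one) // /is_min_of setU11; apply/forall_inP => x.
  rewrite !inE => /orP[/eqP -> //|xt]; move: tT; rewrite inE => /andP[/subsetP tC _].
  by move: (tC x xt); rewrite !inE negb_or lt0n -(inj_eq val_inj) => /andP[].
have cardC : #|~: [set ord0; one]| = N.
  by have := cardsC [set ord0; one]; rewrite cards2 card_ord /=; lia.
have -> : 'C(N, k)%:R * F 1%N = \sum_(s in [set one |: t | t in T]) F #|lower s|.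
  rewrite big_imset => [|t1 t2 /one_notin o1 /one_notin o2 e]; last first.
    by rewrite -(setU1K o1) e setU1K.
  rewrite (eq_bigr (fun _ => F 1%N)) => [|t /card_lower_one -> //].
  by rewrite sumr_const cards_draws cardC mulr_natl.
rewrite [leRHS](bigID (mem [set one |: t | t in T])) /=.
rewrite -[leLHS]addr0 lerD ?sumr_ge0 //.
rewrite le_eqVlt; apply/orP; left; apply/eqP; apply: eq_bigl => s.
apply/idP/andP => [sT|[] //]; split => //.
case/imsetP: sT => t tT ->; rewrite cardsU1 one_notin //.
by move: tT; rewrite inE => /andP[_ /eqP ->].
Qed.

Theorem lemma4p2 (R : realFieldType) (n : nat) (p : R) (k : nat) :
  (2 <= n)%N -> 0 <= p <= 1 -> (1 <= k <= n - 1)%N ->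
  p ^+ ('C(k.+1, 2) + k) * ('C(n - 2, k))%:R * (1 - p)
    <= gnp_expect p (fun E : {set {set 'I_n}} => (Tcrit E k.+1)%:R)
  /\
  (0 < p ->
    gnp_expect p (fun E : {set {set 'I_n}} => (Tcrit E k.+1)%:R)
      <= p ^ (('C(k.+1, 2))%:Z - k%:Z - 1) * ('C(n - 1, k))%:R * (1 - p)).
Proof.
case: n => [|[|N]] // _ /andP[p_ge0 p_le1] /andP[k_ge1 _].
rewrite gnp_expect_Tcrit // !subSS !subn0.
set c := 'C(k.+1, 2).
pose F M := p ^+ c * ((1 - p ^+ k.+1) ^+ M - (1 - p ^+ k) ^+ M).
rewrite (eq_bigr (fun s => F #|lower s|)) //.
have pk_le : p ^+ k.+1 <= p ^+ k by rewrite exprS ler_piMl ?exprn_ge0.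
have pk_le1 : p ^+ k <= 1 by rewrite exprn_ile1.
have F_ge0 M : 0 <= F M.
  rewrite mulr_ge0 ?exprn_ge0 // subr_ge0 lerXn2r ?nnegrE ?lerB //; lra.
split.
  apply: le_trans (sum_card_lower_ge _ N k _ F_ge0).
  rewrite /F !expr1 exprD exprS le_eqVlt; apply/orP; left; apply/eqP.
  by move: (p ^+ c) (p ^+ k) => a b; ring.
move=> p_gt0; apply: le_trans (sum_card_lower_le _ N.+1 k _ F_ge0) _.
have p_neq0 : p != 0 by rewrite lt0r_neq0.
have -> : p ^ (c%:Z - k%:Z - 1) = p ^+ c / p ^+ k.+1.
  rewrite exprnN exprnP -expfzDr //; congr (p ^ _); lia.
apply: (@le_trans _ _ ('C(N.+1, k)%:R * (p ^+ c * ((p ^+ k.+1)^-1 - (p ^+ k)^-1)))).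
  rewrite /F -mulr_sumr ler_wpM2l ?ler0n // ler_wpM2l ?exprn_ge0 //.
  by apply: sum_geometric_diff_le; rewrite ?exprn_gt0.
rewrite exprS le_eqVlt; apply/orP; left; apply/eqP.
move: (p ^+ c) (p ^+ k) (expf_neq0 k p_neq0) => a b b_neq0; field.
by rewrite p_neq0 b_neq0.
Qed.
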